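(* Let $\mathcal{G}$ be a graph with exactly two zealots, with opinions $-1$ and $1$, such that the persuadable subgraph $\mathcal{G}_{\mathcal{P}}$ is $d$-regular for some $d$ and every persuadable node is adjacent to both zealots. Consider the SBCM with parameters $\gamma,\delta\ge0$ and let $\bar{\mathbf{x}}$ be the harmonic state in which every persuadable node has opinion $0$. Let $u=\omega(0)=\frac{1}{1+e^{-\gamma\delta}}$ and $v=\omega(1)=\frac{1}{1+e^{\gamma-\gamma\delta}}$, and let $\mathbf{L}_{\mathcal{P}}$ be the combinatorial Laplacian of $\mathcal{G}_{\mathcal{P}}$. Then the space of unstable directions at $\bar{\mathbf{x}}$ is spanned by the eigenvectors $\mathbf{v}_i$ of $\mathbf{L}_{\mathcal{P}}$ whose eigenvalues $\lambda_i$ satisfy $$\lambda_i\le-\frac{2v\,(1-2\gamma(1-v))}{u}.$$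
   Context: Let $\mathcal{G}$ be a finite undirected unweighted graph without self-loops, adjacency $i\sim j$, with nodes partitioned into zealots $\mathcal{Z}$ and persuadable nodes $\mathcal{P}$; $\mathcal{G}_{\mathcal{P}}$ is the subgraph induced by $\mathcal{P}$, and its combinatorial Laplacian is $\mathbf{D}-\mathbf{A}$ (degree matrix minus adjacency matrix). With $w(x_i,x_j)=\omega(|x_i-x_j|)=\frac{1}{1+e^{\gamma(x_i-x_j)^2-\gamma\delta}}$ for $i\sim j$ and $0$ otherwise, the SBCM is $\frac{dx_i}{dt}=f_i(\mathbf{x})=\frac{\sum_j w(x_i,x_j)(x_j-x_i)}{\sum_j w(x_i,x_j)}$ for $i\in\mathcal{P}$ and $\frac{dx_i}{dt}=0$ for zealots; $\bar{\mathbf{x}}$ is a steady state. The space of unstable directions at a steady state is the span of the eigenvectors of $\mathbf{J}_{\mathcal{P}}=(\partial f_i/\partial x_j)_{i,j\in\mathcal{P}}$ (evaluated there) with nonnegative eigenvalues. *)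

From HB Require Import structures.
From mathcomp Require Import all_boot all_order all_algebra.
From mathcomp Require Import all_classical all_reals all_analysis.
Set Implicit Arguments. Unset Strict Implicit. Unset Printing Implicit Defensive.
Import Order.TTheory GRing.Theory Num.Theory.
Local Open Scope ring_scope.

Section SBCM.
Variable R : realType.
Variable V : finType.

Definition omega (gamma delta r : R) : R :=
  1 / (1 + expR (gamma * r ^+ 2 - gamma * delta)).

Definition sbcm_w (e : rel V) (gamma delta : R) (x : V -> R) (i j : V) : R :=
  if e i j then omega gamma delta `|x i - x j| else 0.

Definition sbcm_f (e : rel V) (gamma delta : R) (x : V -> R) (i : V) : R :=
  (\sum_j sbcm_w e gamma delta x i j * (x j - x i))
  / (\sum_j sbcm_w e gamma delta x i j).

Definition zealots (z1 z2 : V) : {set V} := [set z1; z2].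
Definition pers (z1 z2 : V) := {v : V | v \notin zealots z1 z2}.

Definition full_state (z1 z2 : V) (y : pers z1 z2 -> R) (v : V) : R :=
  match insub v with
  | Some p => y p
  | None => if v == z1 then -1 else 1
  end.

Definition xbar (z1 z2 : V) : pers z1 z2 -> R := fun _ => 0.

(* Jacobian J_P = (d f_i / d x_j)_{i,j in P} at the state (y on P, zealots fixed);
   the partial derivative is the derivative of t |-> f_i(y + t e_j) at t = 0. *)
Definition jacobianP (e : rel V) (gamma delta : R) (z1 z2 : V)
  (y : pers z1 z2 -> R) (i j : pers z1 z2) : R :=
  derive1 (fun t : R =>
    sbcm_f e gamma delta
      (full_state (fun k => y k + (if k == j then t else 0))) (val i)) 0.

Definition laplacianP (e : rel V) (z1 z2 : V) (i j : pers z1 z2) : R :=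
  (if i == j then (#|[set k : pers z1 z2 | e (val i) (val k)]|)%:R else 0)
  - (if e (val i) (val j) then 1 else 0).

Definition is_eigvec (P : finType) (M : P -> P -> R) (mu : R) (v : P -> R) : Prop :=
  (exists p, v p != 0) /\ (forall p, \sum_q M p q * v q = mu * v p).

Definition in_span (P : finType) (S : (P -> R) -> Prop) (y : P -> R) : Prop :=
  exists (n : nat) (s : 'I_n -> P -> R) (c : 'I_n -> R),
    (forall k, S (s k)) /\ (forall p, y p = \sum_(k < n) c k * s k p).

End SBCM.

From HB Require Import structures.
From mathcomp Require Import all_boot all_order all_algebra.
From mathcomp Require Import all_classical all_reals all_analysis.
From mathcomp Require Import ring lra.
Set Implicit Arguments.
Unset Strict Implicit.
Unset Printing Implicit Defensive.
Import Order.TTheory GRing.Theory Num.Theory.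
Local Open Scope ring_scope.

(* At the harmonic state every persuadable node sees its two zealots at distance
   1 (weight v) and its d persuadable neighbours at distance 0 (weight u); the two
   zealot pulls cancel, so the state is steady and the derivative of the quotient
   f_i reduces to the derivative of its numerator divided by 2v + du. Perturbing
   node j moves the distance to each zealot, and omega'(+-1) = -+2 gamma v (1 - v)
   gives J_P = -(u L_P + c I) / (2v + du) with c = 2v(1 - 2 gamma (1 - v)).
   Hence J_P and L_P have the same eigenvectors, and the eigenvalue
   mu = -(u lam + c) / (2v + du) of J_P is nonnegative iff lam <= -c / u. *)

Lemma is_derive_sum_fin (R : realType) (I : finType) (h : I -> R -> R)
    (dh : I -> R) (x : R) :
  (forall k, is_derive x 1 (h k) (dh k)) ->
  is_derive x 1 (fun t => \sum_k h k t) (\sum_k dh k).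
Proof.
rewrite -fct_sumE => hdh; elim/big_ind2: _ => //.
- exact: is_derive_cst.
- by move=> f df g dg; apply: is_deriveD.
Qed.

Lemma is_derive_div_root (R : realType) (N D : R -> R) (x dN dD : R) :
  is_derive x 1 N dN -> is_derive x 1 D dD -> N x = 0 -> D x != 0 ->
  is_derive x 1 (fun t => N t / D t) (dN / D x).
Proof.
move=> hN hD Nx0 Dx0.
have := is_deriveM hN (is_deriveV Dx0 hD).
by rewrite Nx0 scale0r add0r => /is_derive_eq; apply; rewrite mulrC.
Qed.

Lemma is_derive_line (R : realType) (s r : R) :
  is_derive (0 : R) 1 (fun t => s + t * r) r.
Proof.
have -> : (fun t => s + t * r) = cst s + r *: @id R.
  by apply/funext => t; rewrite !fctE mulrC.
by apply: is_derive_eq; rewrite /GRing.scale /= mulr1 add0r.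
Qed.

Section Omega.
Variables (R : realType) (gamma delta : R).

Notation omega := (omega gamma delta).

Definition omega_der (s : R) := - 2 * gamma * s * omega s * (1 - omega s).

Lemma omega_gt0 s : 0 < omega s.
Proof. by rewrite /omega divr_gt0 // addr_gt0 // expR_gt0. Qed.

Lemma omega_norm s : omega `|s| = omega s.
Proof. by rewrite /omega real_normK ?num_real. Qed.

Lemma omegaN s : omega (- s) = omega s.
Proof. by rewrite -omega_norm normrN omega_norm. Qed.

Lemma is_derive_omega (s : R) : is_derive s 1 omega (omega_der s).
Proof.
pose q r := gamma * r ^+ 2 - gamma * delta.
have hq : is_derive s 1 q (gamma * (2 * s)).
  have -> : q = gamma *: (@id R ^+ 2) - cst (gamma * delta).
    by apply/funext => r; rewrite /q !fctE.
  apply: is_derive_eq; rewrite /GRing.scale /= expr1 subr0; ring.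
have hden : is_derive s 1 (fun r => 1 + expR (q r)) (expR (q s) * (gamma * (2 * s))).
  have := is_deriveD (is_derive_cst (1 : R) s 1) (is_derive1_comp (is_derive_expR (q s)) hq).
  by rewrite add0r.
have den_neq0 : 1 + expR (q s) != 0 by rewrite lt0r_neq0 // addr_gt0 // expR_gt0.
have -> : omega = fun r => (1 + expR (q r))^-1 by apply/funext => r; rewrite /omega div1r.
have /(_ den_neq0)/is_derive_eq := fun h => is_deriveV h hden; apply.
by rewrite /omega_der /omega -/(q s) /GRing.scale /=; field; rewrite den_neq0.
Qed.

Lemma is_derive_omega_line (s r : R) :
  is_derive (0 : R) 1 (fun t => omega (s + t * r)) (r * omega_der s).
Proof.
have := is_derive1_comp (g := fun t => s + t * r)
          (is_derive_omega (s + 0 * r)) (is_derive_line s r).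
by rewrite mul0r addr0 mulrC.
Qed.

End Omega.

Section Eigen.
Variables (R : realType) (P : finType) (M : P -> P -> R) (a b : R).
Hypothesis a_neq0 : a != 0.

Lemma is_eigvec_affine (lam : R) (w : P -> R) :
  is_eigvec (fun p q => a * M p q + b * (p == q)%:R) (a * lam + b) w
  <-> is_eigvec M lam w.
Proof.
have sumE p : \sum_q (a * M p q + b * (p == q)%:R) * w q
              = a * (\sum_q M p q * w q) + b * w p.
  rewrite (eq_bigr (fun q => a * (M p q * w q) + b * ((p == q)%:R * w q))).
    rewrite big_split /= -!mulr_sumr; congr (_ + b * _).
    rewrite (bigD1 p) //= eqxx mul1r big1 ?addr0 // => q.
    by rewrite eq_sym => /negbTE ->; rewrite mul0r.
  by move=> q _; ring.
rewrite /is_eigvec; split=> -[w_neq0 eig]; split=> // p.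
- apply: (mulfI a_neq0); apply: (addIr (b * w p)).
  by rewrite -sumE eig; ring.
- by rewrite sumE eig; ring.
Qed.

Lemma exists_eigvec_affine (Q : R -> Prop) (w : P -> R) :
  (exists mu, Q mu /\ is_eigvec (fun p q => a * M p q + b * (p == q)%:R) mu w)
  <-> (exists lam, Q (a * lam + b) /\ is_eigvec M lam w).
Proof.
split=> -[mu [Qmu eig]].
- have muE : mu = a * ((mu - b) / a) + b by field.
  by exists ((mu - b) / a); rewrite -is_eigvec_affine -muE.
- by exists (a * mu + b); rewrite is_eigvec_affine.
Qed.

End Eigen.

Lemma in_span_ext (R : realType) (P : finType) (S T : (P -> R) -> Prop) (y : P -> R) :
  (forall w, S w <-> T w) -> in_span S y <-> in_span T y.
Proof.
by move=> ST; split=> -[n [s [c [Ss ys]]]]; exists n, s, c; split=> // k; apply/ST.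
Qed.

Section Linearization.
Variables (R : realType) (gamma delta : R) (V : finType) (e : rel V).

Definition perturb (x dv : V -> R) (t : R) : V -> R := fun l => x l + t * dv l.

Lemma perturb0 x dv : perturb x dv 0 = x.
Proof. by apply/funext => l; rewrite /perturb mul0r addr0. Qed.

Definition sbcm_w_der (x dv : V -> R) (i k : V) : R :=
  if e i k then (dv i - dv k) * omega_der gamma delta (x i - x k) else 0.

Lemma is_derive_sbcm_w x dv i k :
  is_derive (0 : R) 1 (fun t => sbcm_w e gamma delta (perturb x dv t) i k)
    (sbcm_w_der x dv i k).
Proof.
rewrite /sbcm_w /sbcm_w_der; case: (e i k); last exact: is_derive_cst.
have -> : (fun t => omega gamma delta `|perturb x dv t i - perturb x dv t k|)
          = fun t => omega gamma delta ((x i - x k) + t * (dv i - dv k)).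
  by apply/funext => t; rewrite omega_norm /perturb; congr omega; ring.
exact: is_derive_omega_line.
Qed.

Lemma is_derive_sbcm_f x dv i :
  sbcm_f e gamma delta x i = 0 -> \sum_k sbcm_w e gamma delta x i k != 0 ->
  is_derive (0 : R) 1 (fun t => sbcm_f e gamma delta (perturb x dv t) i)
    ((\sum_k (sbcm_w e gamma delta x i k * (dv k - dv i)
              + (x k - x i) * sbcm_w_der x dv i k))
     / \sum_k sbcm_w e gamma delta x i k).
Proof.
move=> f0 den_neq0.
have num0 : \sum_k sbcm_w e gamma delta x i k * (x k - x i) = 0.
  move: f0; rewrite /sbcm_f => /eqP.
  by rewrite mulf_eq0 invr_eq0 (negbTE den_neq0) orbF => /eqP.
have hD := is_derive_sum_fin (fun k => is_derive_sbcm_w x dv i k).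
have hN : is_derive (0 : R) 1
    (fun t => \sum_k sbcm_w e gamma delta (perturb x dv t) i k
                     * (perturb x dv t k - perturb x dv t i))
    (\sum_k (sbcm_w e gamma delta x i k * (dv k - dv i)
             + (x k - x i) * sbcm_w_der x dv i k)).
  apply: is_derive_sum_fin => k.
  have -> : (fun t => sbcm_w e gamma delta (perturb x dv t) i k
                      * (perturb x dv t k - perturb x dv t i))
            = (fun t => sbcm_w e gamma delta (perturb x dv t) i k)
              * (fun t => (x k - x i) + t * (dv k - dv i)).
    by apply/funext => t; rewrite !fctE /perturb; congr (_ * _); ring.
  have := is_deriveM (is_derive_sbcm_w x dv i k)
            (is_derive_line (x k - x i) (dv k - dv i)).
  move/is_derive_eq; apply.
  by rewrite perturb0 mul0r addr0 /GRing.scale /=; ring.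
by have := is_derive_div_root hN hD; rewrite !perturb0; apply.
Qed.

End Linearization.

Section HarmonicState.
Variables (R : realType) (gamma delta : R) (V : finType) (e : rel V).
Variables (z1 z2 : V) (d : nat).
Hypothesis z12 : z1 != z2.
Hypothesis regular : forall i : pers z1 z2,
  #|[set k : pers z1 z2 | e (val i) (val k)]| = d.
Hypothesis adj_zealots : forall i : pers z1 z2, e (val i) z1 /\ e (val i) z2.

Let u := omega gamma delta 0.
Let v := omega gamma delta 1.
Let w := sbcm_w e gamma delta.
Let x0 : V -> R := full_state (@xbar R V z1 z2).
Let L := @laplacianP R V e z1 z2.

Lemma xbar_pers (p : pers z1 z2) : x0 (val p) = 0.
Proof.
rewrite /x0 /full_state; case: insubP => [//|].
by rewrite (valP p).
Qed.

Lemma xbar_z1 : x0 z1 = -1.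
Proof.
rewrite /x0 /full_state; case: insubP => [q|]; last by rewrite eqxx.
by rewrite /zealots !inE eqxx.
Qed.

Lemma xbar_z2 : x0 z2 = 1.
Proof.
rewrite /x0 /full_state; case: insubP => [q|]; first by rewrite /zealots !inE eqxx orbT.
by rewrite eq_sym (negbTE z12).
Qed.

Definition pers_dir (j : pers z1 z2) (l : V) : R := (l == val j)%:R.

Lemma pers_dir_zealot j z : z \in zealots z1 z2 -> pers_dir j z = 0.
Proof. by rewrite /pers_dir; case: eqP => // ->; rewrite (negbTE (valP j)). Qed.

Lemma pers_dir_pers j (p : pers z1 z2) : pers_dir j (val p) = (p == j)%:R.
Proof. by rewrite /pers_dir (inj_eq val_inj). Qed.

Lemma full_state_xbar_dir j t :
  full_state (fun k => @xbar R V z1 z2 k + (if k == j then t else 0))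
  = perturb x0 (pers_dir j) t.
Proof.
apply/funext => l; rewrite /perturb /x0 /full_state.
case: insubP => [q _ <-|/negbNE l_zealot].
  by rewrite pers_dir_pers !add0r; case: (q == j); rewrite ?mulr1 ?mulr0.
by rewrite pers_dir_zealot // mulr0 addr0.
Qed.

Lemma sum_zealots_pers (F : V -> R) :
  \sum_k F k = F z1 + F z2 + \sum_(p : pers z1 z2) F (val p).
Proof.
rewrite (bigID (mem (zealots z1 z2))) /=; congr (_ + _).
  by rewrite /zealots big_setU1 /= ?big_set1 // inE.
by rewrite (big_sub (fun k => k \notin zealots z1 z2)).
Qed.

Lemma sum_pers_adj (i : pers z1 z2) (c : R) :
  \sum_(p : pers z1 z2) (if e (val i) (val p) then c else 0) = c * d%:R.
Proof. by rewrite -big_mkcond /= sumr_const -(regular i) cardsE mulr_natr. Qed.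

Lemma sum_w_xbar (i : pers z1 z2) : \sum_k w x0 (val i) k = 2 * v + d%:R * u.
Proof.
have [adj1 adj2] := adj_zealots i.
rewrite sum_zealots_pers (eq_bigr (fun p => if e (val i) (val p) then u else 0)).
  rewrite sum_pers_adj /w /sbcm_w adj1 adj2 !xbar_pers xbar_z1 xbar_z2.
  by rewrite !sub0r opprK normrN normr1 -/v; ring.
by move=> p _; rewrite /w /sbcm_w !xbar_pers subrr normr0.
Qed.

Lemma sum_w_xbar_gt0 : 0 < 2 * v + d%:R * u.
Proof. by apply: ltr_wpDr; rewrite ?mulr_ge0 ?mulr_gt0 // ?ltW // omega_gt0. Qed.

Lemma sbcm_f_xbar (i : pers z1 z2) : sbcm_f e gamma delta x0 (val i) = 0.
Proof.
have [adj1 adj2] := adj_zealots i.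
rewrite /sbcm_f [X in X / _]sum_zealots_pers big1 => [|p _]; last first.
  by rewrite !xbar_pers subrr mulr0.
rewrite /sbcm_w adj1 adj2 !xbar_pers xbar_z1 xbar_z2 !sub0r opprK normrN.
by rewrite !subr0 addr0 mulrN1 mulr1 addNr mul0r.
Qed.

Let c := 2 * v * (1 - 2 * gamma * (1 - v)).

Lemma z1_zealot : z1 \in zealots z1 z2.
Proof. by rewrite !inE eqxx. Qed.

Lemma z2_zealot : z2 \in zealots z1 z2.
Proof. by rewrite !inE eqxx orbT. Qed.

Lemma sum_der_xbar (i j : pers z1 z2) :
  \sum_k (w x0 (val i) k * (pers_dir j k - pers_dir j (val i))
          + (x0 k - x0 (val i)) * sbcm_w_der gamma delta e x0 (pers_dir j) (val i) k)
  = - (u * L i j + c * (i == j)%:R).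
Proof.
have [adj1 adj2] := adj_zealots i.
have pers_term (p : pers z1 z2) :
    w x0 (val i) (val p) * (pers_dir j (val p) - pers_dir j (val i))
    + (x0 (val p) - x0 (val i)) * sbcm_w_der gamma delta e x0 (pers_dir j) (val i) (val p)
    = (if e (val i) (val p) then u * (p == j)%:R else 0)
      - (if e (val i) (val p) then u else 0) * (i == j)%:R.
  rewrite /w /sbcm_w !xbar_pers subrr normr0 mul0r addr0 !pers_dir_pers.
  by rewrite -/u; case: (e _ _); ring.
rewrite sum_zealots_pers (eq_bigr _ (fun p _ => pers_term p)) sumrB -mulr_suml.
rewrite sum_pers_adj (bigD1 j) //= big1 => [|p /negbTE p_neq_j]; last first.
  by rewrite p_neq_j mulr0; case: (e _ _).
rewrite /w /sbcm_w /sbcm_w_der adj1 adj2 !xbar_pers xbar_z1 xbar_z2.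
rewrite (pers_dir_zealot j z1_zealot) (pers_dir_zealot j z2_zealot) pers_dir_pers.
rewrite /L /laplacianP regular eqxx /omega_der !sub0r opprK omegaN normrN normr1 -/u -/v.
by case: (i == j); case: (e _ _); rewrite /c /=; ring.
Qed.

Lemma jacobianP_xbar :
  jacobianP e gamma delta (@xbar R V z1 z2)
  = fun i j => - u / (2 * v + d%:R * u) * L i j
               + - c / (2 * v + d%:R * u) * (i == j)%:R.
Proof.
apply/funext => i; apply/funext => j; rewrite /jacobianP.
under eq_fun do rewrite full_state_xbar_dir.
have den_neq0 : \sum_k w x0 (val i) k != 0.
  by rewrite sum_w_xbar lt0r_neq0 ?sum_w_xbar_gt0.
have := is_derive_sbcm_f (pers_dir j) (sbcm_f_xbar i) den_neq0.
move=> der_f; rewrite derive1E derive_val.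
by rewrite sum_der_xbar sum_w_xbar; field; rewrite lt0r_neq0 ?sum_w_xbar_gt0.
Qed.

End HarmonicState.

Theorem theorem7 (R : realType) (V : finType) (e : rel V) (z1 z2 : V)
  (d : nat) (gamma delta : R) :
  symmetric e -> irreflexive e -> z1 != z2 ->
  (* G_P is d-regular *)
  (forall i : pers z1 z2, #|[set k : pers z1 z2 | e (val i) (val k)]| = d) ->
  (* every persuadable node is adjacent to both zealots *)
  (forall i : pers z1 z2, e (val i) z1 /\ e (val i) z2) ->
  0 <= gamma -> 0 <= delta ->
  let u := omega gamma delta 0 in
  let v := omega gamma delta 1 in
  forall y : pers z1 z2 -> R,
    in_span (fun w => exists mu, 0 <= mu /\
               is_eigvec (jacobianP e gamma delta (@xbar R V z1 z2)) mu w) y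
    <->
    in_span (fun w => exists lam,
               lam <= - (2 * v * (1 - 2 * gamma * (1 - v))) / u /\
               is_eigvec (@laplacianP R V e z1 z2) lam w) y.
Proof.
move=> _ _ z12 regular adj_zealots _ _ u v y.
set c := 2 * v * (1 - 2 * gamma * (1 - v)).
set D := 2 * v + d%:R * u.
have u_gt0 : 0 < u := omega_gt0 gamma delta 0.
have D_gt0 : 0 < D := sum_w_xbar_gt0 gamma delta d.
have mu_ge0E lam : 0 <= - u / D * lam + - c / D <-> lam <= - c / u.
  have -> : - u / D * lam + - c / D = - (u * lam + c) / D by field; rewrite lt0r_neq0.
  rewrite pmulr_lge0 ?invr_gt0 // ler_pdivlMr //.
  by split=> ?; lra.
apply: in_span_ext => w.
rewrite (jacobianP_xbar gamma delta z12 regular adj_zealots).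
rewrite exists_eigvec_affine; last by rewrite mulf_neq0 ?oppr_eq0 ?invr_eq0 ?lt0r_neq0.
by split=> -[lam [/mu_ge0E lam_bound eig]]; exists lam; split=> //; apply/mu_ge0E.
Qed.
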